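(* Let $X$ be a finite simple graph on vertex set $\{1,\dots,n\}$ and let $\pi\in S_X$. For each $\star\in\{\uparrow,\downarrow,\updownarrow\}$ (increasing, decreasing, mixed), the extended threshold SDS map $\mathbf{F}^\star_\pi$ has no periodic orbit of length $\ge 2$, i.e. all its periodic points are fixed points. For each $\star\in\{\uparrow,\downarrow,\updownarrow\}$, the extended threshold GCA map $\mathbf{F}^\star$ has no periodic orbit of length $\ge 3$, i.e. every periodic orbit has length $1$ or $2$.
   Context: Let $X$ be a finite simple graph with vertices $1,\dots,n$; $d(v)$ denotes the degree of $v$ and $n[v]$ the closed neighborhood of $v$ (including $v$). An extended vertex state is $s_v=(x_v,k_v)\in\{0,1\}\times\{1,2,\dots,d(v)+1\}$; the extended system state is $s=(s_1,\dots,s_n)\in\mathcal{S}=\prod_v(\{0,1\}\times\{1,\dots,d(v)+1\})$. Write $\sigma(x[v])=|\{u\in n[v]: x_u=1\}|$. The vertex function $f_v$ maps $s_v$ to $(x_v',k_v')$ where $x_v'=1$ if $\sigma(x[v])\ge k_v$ and $x_v'=0$ otherwise, and $k_v'$ is given by: increasing ($\uparrow$): $k_v'=k_v+1$ if $x_v=0$ and $\sigma(x[v])\ge k_v$, else $k_v'=k_v$; decreasing ($\downarrow$): $k_v'=k_v-1$ if $x_v=1$ and $\sigma(x[v])<k_v$, else $k_v'=k_v$; mixed ($\updownarrow$): $k_v'=k_v+1$ if $x_v=0$ and $\sigma(x[v])\ge k_v$, $k_v'=k_v-1$ if $x_v=1$ and $\sigma(x[v])<k_v$, else $k_v'=k_v$.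 The local map $F_v:\mathcal{S}\to\mathcal{S}$ replaces $s_v$ by $f_v$ applied to the current states of $n[v]$ and leaves other coordinates unchanged. For a permutation $\pi=(\pi_1,\dots,\pi_n)$ of the vertices, the sequential (SDS) map is $\mathbf{F}_\pi=F_{\pi_n}\circ\cdots\circ F_{\pi_1}$; the parallel (GCA) map $\mathbf{F}$ updates all vertices simultaneously, $\mathbf{F}(s)_v=f_v(s[v])$. A periodic orbit of length $m$ is a cycle of $m$ distinct states in the phase space (the functional graph $s\mapsto\phi(s)$). *)

From mathcomp Require Import all_boot.
From mathcomp Require Import perm.
Set Implicit Arguments. Unset Strict Implicit. Unset Printing Implicit Defensive.

Inductive mode := Incr | Decr | Mixed.

Section Threshold.
Variables (n : nat) (e : rel 'I_n).

Definition cnbhd (v : 'I_n) : {set 'I_n} := [set u | (u == v) || e v u].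
Definition deg (v : 'I_n) : nat := #|[set u | e v u]|.

(* an extended system state: vertex v |-> (x_v, k_v) *)
Definition state := {ffun 'I_n -> bool * nat}.

Definition valid_state (s : state) : bool :=
  [forall v, (1 <= (s v).2 <= deg v + 1)%N].

Definition sigma (s : state) (v : 'I_n) : nat :=
  #|[set u in cnbhd v | (s u).1]|.

Definition fv (m : mode) (s : state) (v : 'I_n) : bool * nat :=
  let x := (s v).1 in let k := (s v).2 in
  let act := (k <= sigma s v)%N in
  (act,
   match m with
   | Incr => if ~~ x && act then k.+1 else k
   | Decr => if x && ~~ act then k.-1 else k
   | Mixed => if ~~ x && act then k.+1 else if x && ~~ act then k.-1 else k
   end).

Definition Floc (m : mode) (v : 'I_n) (s : state) : state :=
  [ffun u => if u == v then fv m s v else s u].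

Definition SDS (m : mode) (pi : {perm 'I_n}) (s : state) : state :=
  foldl (fun t i => Floc m (pi i) t) s (enum 'I_n).

Definition GCA (m : mode) (s : state) : state := [ffun v => fv m s v].

Definition periodic_orbit (phi : state -> state) (c : seq state) : Prop :=
  [/\ c != [::], uniq c, all valid_state c & cycle (fun a b => phi a == b) c].

End Threshold.

Definition simple_graph (n : nat) (e : rel 'I_n) : Prop :=
  symmetric e /\ irreflexive e.

(** The proof is by Lyapunov functions.  Writing the state of [v] as [(x, k)],
  put [rho = 2k + [x = 0]]: every increasing update raises [rho] at its vertex
  unless it leaves the vertex unchanged, and every decreasing update lowers it,
  so [sum rho] rules out periodic orbits for any order of updates.  A mixed
  update preserves [k + [x = 0]], hence the threshold [T_v = k + [x = 0] - 1]
  that [v] compares with its number [N_v] of active neighbours; the Hopfield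
  energy [2 sum T_v x_v - sum x_v N_v] does not increase under a single update,
  and when it stays constant the number of inactive vertices drops unless the
  state is fixed.  For the parallel map, Goles' two-step functional
  [sum T_w (x_w + y_w) - sum y_w N_w(x)] for consecutive states [x, y] plays
  the same role for the square of the map, which forbids periods beyond 2. *)
From mathcomp Require Import all_boot ssralg ssrnum ssrint zify perm.
Set Implicit Arguments. Unset Strict Implicit. Unset Printing Implicit Defensive.

Section LexLyapunov.
Variables (T : Type) (V : T -> int) (W : T -> nat).

Definition lex_lyapunov (f : T -> T) :=
  forall s, (V (f s) <= V s)%R /\
    (V (f s) = V s -> (W (f s) <= W s)%N /\ (W (f s) = W s -> f s = s)).

Lemma lex_lyapunov_id : lex_lyapunov id.
Proof. by move=> s; split. Qed.

Lemma lex_lyapunov_comp f g :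
  lex_lyapunov f -> lex_lyapunov g -> lex_lyapunov (g \o f).
Proof.
move=> hf hg s /=; have [Vf Wf] := hf s; have [Vg Wg] := hg (f s).
split=> [|/= EV]; first lia.
have [Wf1 Wf2] := Wf ltac:(lia).
have [Wg1 Wg2] := Wg ltac:(lia).
split=> [|/= EW]; first lia.
rewrite Wg2; last lia.
by apply: Wf2; lia.
Qed.

Lemma lex_lyapunov_foldl (I : Type) (F : I -> T -> T) (r : seq I) :
  (forall i, lex_lyapunov (F i)) ->
  lex_lyapunov (fun s => foldl (fun t i => F i t) s r).
Proof.
move=> hF; elim: r => [|i r IH] /=; first exact: lex_lyapunov_id.
exact: lex_lyapunov_comp (hF i) IH.
Qed.

Lemma lex_lyapunov_iter f k : lex_lyapunov f -> lex_lyapunov (iter k f).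
Proof.
move=> hf; elim: k => [|k IH]; first exact: lex_lyapunov_id.
exact: lex_lyapunov_comp IH hf.
Qed.

(* Along [s, f s, ..., iter k.+1 f s = s] both potentials are monotone and
   return to their initial values, so they are constant on the first step. *)
Lemma lex_lyapunov_periodic {f k s} :
  lex_lyapunov f -> iter k.+1 f s = s -> f s = s.
Proof.
move=> hf; rewrite iterSr => per.
have [Vf Wf] := hf s; have [Vk Wk] := lex_lyapunov_iter k hf (f s).
rewrite per in Vk Wk.
have [Wf1 Wf2] := Wf ltac:(lia).
have [Wk1 _] := Wk ltac:(lia).
by apply: Wf2; lia.
Qed.

Lemma lex_lyapunov_period2 {f k s} :
  lex_lyapunov (iter 2 f) -> iter k.+1 f s = s -> iter 2 f s = s.
Proof.
move=> hf per; apply: (lex_lyapunov_periodic (k := k) hf).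
by rewrite -iterM mulnC iterM -[iter 2 _ _]/(iter k.+1 f (iter k.+1 f s)) !per.
Qed.

End LexLyapunov.

Section Cycles.
Variables (T : eqType) (f : T -> T).

Lemma fcycle_traject x p :
  fcycle f (x :: p) -> x :: p = traject f x (size p).+1 /\ iter (size p).+1 f x = x.
Proof.
move=> /fpathE; rewrite size_rcons trajectSr => /rcons_inj[ep ex].
by rewrite trajectS iterSr -ep -ex.
Qed.

Lemma uniq_traject_le_period {x k j} :
  uniq (traject f x k) -> iter j.+1 f x = x -> k <= j.+1.
Proof.
move=> uniq_tr per; rewrite leqNgt; apply/negP => lt_jk.
have lt_0k : 0 < k by apply: leq_trans lt_jk.
have := @nth_uniq _ x (traject f x k) 0 j.+1.
by rewrite size_traject lt_0k lt_jk uniq_tr !nth_traject // per eqxx => /(_ isT isT isT).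
Qed.

Lemma fcycle_size_le {j c} : uniq c -> fcycle f c ->
  (forall k x, iter k.+1 f x = x -> iter j.+1 f x = x) -> size c <= j.+1.
Proof.
case: c => [//|x p] uniq_c /fcycle_traject[ec per] hper.
rewrite ec in uniq_c.
exact: uniq_traject_le_period uniq_c (hper _ _ per).
Qed.

End Cycles.

Lemma leqif_sum_ffun (I : finType) (A : eqType) (P : A -> nat) (s t : {ffun I -> A}) :
  (forall i, P (s i) <= P (t i) ?= iff (t i == s i)) ->
  \sum_i P (s i) <= \sum_i P (t i) ?= iff (t == s).
Proof.
move=> leP; rewrite (_ : (t == s) = [forall i, t i == s i]); first exact: leqif_sum.
by apply/eqP/forallP => [-> i | eq_ts]; last apply/ffunP => i; apply/eqP.
Qed.

Lemma leq_sum_eq (I : finType) (F G : I -> nat) :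
  (forall i, F i <= G i) -> \sum_i F i = \sum_i G i -> forall i, F i = G i.
Proof.
move=> le_FG /eqP; rewrite (leqif_sum (fun i _ => leqif_eq (le_FG i))).2.
by move=> /forallP eq_FG i; apply/eqP; exact: eq_FG.
Qed.

Section Threshold.
Variables (n : nat) (e : rel 'I_n).
Hypotheses (e_sym : symmetric e) (e_irr : irreflexive e).

Definition rho (p : bool * nat) : nat := 2 * p.2 + ~~ p.1.

Lemma fv_incr_rho (s : state n) v :
  rho (s v) <= rho (fv e Incr s v) ?= iff (fv e Incr s v == s v).
Proof.
rewrite /fv /rho; move: (sigma e s v) => sg; case: (s v) => [[] k] /=;
by case: leqP => h; apply/leqifP; rewrite /= ?xpair_eqE ?eqxx //=; lia.
Qed.

Lemma fv_decr_rho (s : state n) v :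
  rho (fv e Decr s v) <= rho (s v) ?= iff (s v == fv e Decr s v).
Proof.
rewrite /fv /rho; move: (sigma e s v) => sg; case: (s v) => [[] k] /=;
by case: leqP => h; apply/leqifP; rewrite /= ?xpair_eqE ?eqxx //=; lia.
Qed.

Definition vertexwise m (g : state n -> state n) :=
  forall s w, g s w = s w \/ g s w = fv e m s w.

Lemma Floc_vertexwise m v : vertexwise m (Floc e m v).
Proof. by move=> s w; rewrite ffunE; case: eqP => [->|]; auto. Qed.

Lemma GCA_vertexwise m : vertexwise m (GCA e m).
Proof. by move=> s w; rewrite ffunE; auto. Qed.

Lemma lex_lyapunov_incr g : vertexwise Incr g ->
  lex_lyapunov (fun s : state n => - (\sum_w rho (s w))%:Z)%R (fun=> 0) g.
Proof.
move=> hg s.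
have [le_rho eq_rho] : \sum_w rho (s w) <= \sum_w rho (g s w) ?= iff (g s == s).
  apply: leqif_sum_ffun => w.
  by case: (hg s w) => ->; [apply/leqif_refl | apply: fv_incr_rho].
split=> [|E]; first lia.
by split=> // _; apply/eqP; rewrite -eq_rho; apply/eqP; lia.
Qed.

Lemma lex_lyapunov_decr g : vertexwise Decr g ->
  lex_lyapunov (fun s : state n => (\sum_w rho (s w))%:Z)%R (fun=> 0) g.
Proof.
move=> hg s.
have [le_rho eq_rho] : \sum_w rho (g s w) <= \sum_w rho (s w) ?= iff (s == g s).
  apply: leqif_sum_ffun => w.
  by case: (hg s w) => ->; [apply/leqif_refl | apply: fv_decr_rho].
split=> [|E]; first lia.
by split=> // _; apply/eqP; rewrite eq_sym -eq_rho; apply/eqP; lia.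
Qed.

Definition active (s : state n) w : nat := (s w).1.
Definition active_nbrs (s : state n) v : nat := \sum_u (e v u && (s u).1 : nat).

(* [k + [x = 0]] is invariant under mixed updates; one less than it is the
   number of active neighbours a vertex needs in order to be active next. *)
Definition level (p : bool * nat) : nat := p.2 + ~~ p.1.
Definition nbr_threshold (s : state n) w : nat := (level (s w)).-1.

Lemma active_nbrs_off s v :
  active_nbrs s v = \sum_(u | u != v) (e v u && (s u).1 : nat).
Proof. by rewrite /active_nbrs (bigD1 v) //= e_irr. Qed.

Lemma sigmaE s v : sigma e s v = (s v).1 + active_nbrs s v.
Proof.
rewrite /sigma (cardsD1 v) !inE eqxx -sum1dep_card big_mkcond /=.
congr (_ + _); apply: eq_bigr => u _; rewrite /cnbhd !inE.
by case: eqVneq => [->|] /=; rewrite ?e_irr //; case: (e v u); case: (s u).1.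
Qed.

Lemma fv_activeE m s v :
  (fv e m s v).1 = (nbr_threshold s v <= active_nbrs s v).
Proof.
by rewrite /fv /= sigmaE /nbr_threshold /level; case: (s v) => [[] [|k]] /=; lia.
Qed.

Lemma level_fv_mixed s v : level (fv e Mixed s v) = level (s v).
Proof.
rewrite /fv /level; move: (sigma e s v) => sg; case: (s v) => [[] k] /=;
by case: leqP => /=; lia.
Qed.

Lemma fv_mixed_fixed s v : (fv e Mixed s v).1 = (s v).1 -> fv e Mixed s v = s v.
Proof.
rewrite /fv; move: (sigma e s v) => sg; case: (s v) => [[] k] /=;
by case: leqP.
Qed.

Lemma vertexwise_mixed_level g s w :
  vertexwise Mixed g -> level (g s w) = level (s w).
Proof. by move=> hg; case: (hg s w) => ->; rewrite ?level_fv_mixed. Qed.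

Lemma state_eq_level (s t : state n) :
  (forall w, (t w).1 = (s w).1) -> (forall w, level (t w) = level (s w)) -> t = s.
Proof.
move=> eq_x eq_level; apply/ffunP => w; have := eq_level w; rewrite /level eq_x.
by case: (t w) (s w) (eq_x w) => [x k] [y l] /= -> ?; congr pair; lia.
Qed.

Definition edge_sum (s : state n) : nat := \sum_w active s w * active_nbrs s w.
Definition edge_sum_off (s : state n) v : nat :=
  \sum_(w | w != v) \sum_(u | u != v) active s w * (e w u && (s u).1).

Lemma edge_sum_split s v :
  edge_sum s = 2 * (active s v * active_nbrs s v) + edge_sum_off s v.
Proof.
rewrite /edge_sum (bigD1 v) //=.
have -> : \sum_(w | w != v) active s w * active_nbrs s w =
    \sum_(w | w != v) active s w * (e w v && (s v).1) + edge_sum_off s v.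
  rewrite /edge_sum_off -big_split /=; apply: eq_bigr => w _.
  by rewrite /active_nbrs (bigD1 v) //= mulnDr big_distrr.
suff -> : \sum_(w | w != v) active s w * (e w v && (s v).1) = active s v * active_nbrs s v.
  by lia.
rewrite active_nbrs_off big_distrr; apply: eq_bigr => w _.
by rewrite /active (e_sym w v); case: (s w).1; case: (s v).1; case: (e v w).
Qed.

Definition threshold_sum (s : state n) : nat := \sum_w nbr_threshold s w * active s w.
Definition energy (s : state n) : int := (2 * threshold_sum s)%:Z - (edge_sum s)%:Z.
Definition energy_off (s : state n) v : int :=
  (2 * \sum_(w | w != v) nbr_threshold s w * active s w)%:Z - (edge_sum_off s v)%:Z.
Definition inactive (s : state n) : nat := \sum_w ~~ (s w).1.

Lemma energy_split s v : energy s =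
  ((2 * (nbr_threshold s v * active s v))%:Z
   - (2 * (active s v * active_nbrs s v))%:Z + energy_off s v)%R.
Proof.
by rewrite /energy /energy_off (edge_sum_split s v) /threshold_sum (bigD1 v) //=; lia.
Qed.

Lemma inactive_split s v :
  inactive s = ~~ (s v).1 + \sum_(w | w != v) ~~ (s w).1.
Proof. by rewrite /inactive (bigD1 v). Qed.

Section AgreeOff.
Variables (s t : state n) (v : 'I_n).
Hypothesis agree : forall w, w != v -> t w = s w.

Lemma energy_off_agree : energy_off t v = energy_off s v.
Proof.
rewrite /energy_off /edge_sum_off /nbr_threshold /active.
congr (Posz (2 * _) - Posz _)%R; apply: eq_bigr => w /agree -> //.
by apply: eq_bigr => u /agree ->.
Qed.

Lemma active_nbrs_agree : active_nbrs t v = active_nbrs s v.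
Proof. by rewrite !active_nbrs_off; apply: eq_bigr => u /agree ->. Qed.

Lemma inactive_off_agree :
  \sum_(w | w != v) ~~ (t w).1 = \sum_(w | w != v) ~~ (s w).1.
Proof. by apply: eq_bigr => w /agree ->. Qed.

End AgreeOff.

(* With the other vertices frozen, updating [v] changes the energy by
   [2 (x' - x) (T_v - N_v)], which is never positive since [x' = [T_v <= N_v]]. *)
Lemma lex_lyapunov_Floc_mixed v : lex_lyapunov energy inactive (Floc e Mixed v).
Proof.
move=> s; set t := Floc e Mixed v s.
have agree w : w != v -> t w = s w by rewrite /t ffunE => /negbTE ->.
have tv : t v = fv e Mixed s v by rewrite /t ffunE eqxx.
have eT : nbr_threshold t v = nbr_threshold s v.
  by rewrite /nbr_threshold tv level_fv_mixed.
have fixed : (t v).1 = (s v).1 -> t = s.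
  move=> eq_x; apply/ffunP => w; have [->|/agree//] := eqVneq w v.
  by rewrite tv fv_mixed_fixed // -tv.
have xt : (t v).1 = (nbr_threshold s v <= active_nbrs s v) by rewrite tv fv_activeE.
rewrite !(inactive_split _ v) !(energy_split _ v) (energy_off_agree agree).
rewrite (active_nbrs_agree agree) (inactive_off_agree agree) eT /active.
move: fixed; rewrite xt.
case: leqP; case: (s v).1 => /= hTN fixed; split=> //; try lia.
all: by move=> E; split; [lia | move=> _; exact: fixed].
Qed.

Lemma nbr_threshold_GCA_mixed a w :
  nbr_threshold (GCA e Mixed a) w = nbr_threshold a w.
Proof. by rewrite /nbr_threshold (vertexwise_mixed_level _ _ (GCA_vertexwise Mixed)). Qed.

Lemma active_GCA m a w :
  active (GCA e m a) w = (nbr_threshold a w <= active_nbrs a w).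
Proof. by rewrite /active ffunE fv_activeE. Qed.

Lemma active_nbrs_sym a b :
  \sum_w active b w * active_nbrs a w = \sum_w active a w * active_nbrs b w.
Proof.
rewrite /active_nbrs.
under eq_bigr => w _ do rewrite big_distrr.
under [RHS]eq_bigr => w _ do rewrite big_distrr.
rewrite exchange_big /=; apply: eq_bigr => u _; apply: eq_bigr => w _.
by rewrite /active (e_sym w u); case: (b w).1; case: (a u).1; case: (e u w).
Qed.

Definition gca_energy (a b : state n) : int :=
  (\sum_w nbr_threshold a w * (active a w + active b w))%:Z
  - (\sum_w active b w * active_nbrs a w)%:Z.

(* For [b = F a] and [c = F b], the difference of the functional on [(a, b)]
   and on [(b, c)] is [sum_w (x^c_w - x^a_w) (N_w(b) - T_w)], and each term is
   nonnegative because [x^c_w = [T_w <= N_w(b)]]. *)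
Lemma gca_energy_step a :
  let b := GCA e Mixed a in let c := GCA e Mixed b in
  (gca_energy b c <= gca_energy a b)%R /\
  (gca_energy b c = gca_energy a b -> forall v, active a v <= active c v).
Proof.
move=> b c.
have eT w : nbr_threshold b w = nbr_threshold a w by apply: nbr_threshold_GCA_mixed.
have xc w : active c w = (nbr_threshold a w <= active_nbrs b w) by rewrite active_GCA eT.
pose lhs w := nbr_threshold a w * (active b w + active c w) + active a w * active_nbrs b w.
pose rhs w := nbr_threshold a w * (active a w + active b w) + active c w * active_nbrs b w.
have le_lr w : lhs w <= rhs w.
  rewrite /lhs /rhs xc /active.
  move: (a w).1 (b w).1 (nbr_threshold a w) (active_nbrs b w) => x y T N.
  by case: (leqP T N) => h; case: x; case: y => /=; nia.
have sum_lhs : \sum_w lhs w =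
    \sum_w nbr_threshold b w * (active b w + active c w) + \sum_w active a w * active_nbrs b w.
  by rewrite -big_split /=; apply: eq_bigr => w _; rewrite eT.
have sum_rhs : \sum_w rhs w =
    \sum_w nbr_threshold a w * (active a w + active b w) + \sum_w active c w * active_nbrs b w.
  by rewrite -big_split.
have le_sum : \sum_w lhs w <= \sum_w rhs w by apply: leq_sum => w _.
rewrite /gca_energy (active_nbrs_sym a b).
split=> [|E v]; first lia.
have := leq_sum_eq le_lr ltac:(lia) v; rewrite /lhs /rhs xc /active.
move: (a v).1 (b v).1 (nbr_threshold a v) (active_nbrs b v) => x y T N.
by case: (leqP T N) => h; case: x; case: y => //=; nia.
Qed.

Lemma lex_lyapunov_GCA2_mixed :
  lex_lyapunov (fun s => gca_energy s (GCA e Mixed s)) inactive (iter 2 (GCA e Mixed)).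
Proof.
move=> s /=.
have [le1 eq1] := gca_energy_step s.
have [le2 _] := gca_energy_step (GCA e Mixed s).
move: le1 eq1 le2; set b := GCA e Mixed s; set c := GCA e Mixed b => le1 eq1 le2.
split=> [|E]; first lia.
have le_x := eq1 ltac:(lia).
have le_inactive w : ~~ (c w).1 <= ~~ (s w).1.
  by have := le_x w; rewrite /active; case: (c w).1; case: (s w).1.
split=> [|EZ]; first exact: leq_sum.
apply: state_eq_level => w.
  have := leq_sum_eq le_inactive EZ w; have := le_x w; rewrite /active.
  by case: (c w).1; case: (s w).1.
by rewrite /c /b !(vertexwise_mixed_level _ _ (GCA_vertexwise Mixed)).
Qed.

Lemma SDS_orbit_size1 m pi (V : state n -> int) (W : state n -> nat) :
  (forall v, lex_lyapunov V W (Floc e m v)) ->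
  forall c, periodic_orbit e (SDS e m pi) c -> size c = 1.
Proof.
move=> lyap c [c_nil uniq_c _ cyc_c].
have lyap_SDS : lex_lyapunov V W (SDS e m pi).
  exact: lex_lyapunov_foldl (fun i => lyap (pi i)).
have : size c <= 1.
  apply: (fcycle_size_le (f := SDS e m pi) uniq_c cyc_c) => k x.
  exact: lex_lyapunov_periodic lyap_SDS.
by move=> le_c1; apply: anti_leq; rewrite le_c1 lt0n size_eq0.
Qed.

Lemma GCA_orbit_size_le2 m (V : state n -> int) (W : state n -> nat) :
  lex_lyapunov V W (iter 2 (GCA e m)) ->
  forall c, periodic_orbit e (GCA e m) c -> size c <= 2.
Proof.
move=> lyap c [_ uniq_c _ cyc_c].
apply: (fcycle_size_le (f := GCA e m) uniq_c cyc_c) => k x.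
exact: lex_lyapunov_period2 lyap.
Qed.

Lemma Floc_lex_lyapunov m : exists (V : state n -> int) (W : state n -> nat),
  forall v, lex_lyapunov V W (Floc e m v).
Proof.
case: m; eexists; eexists => v.
- exact: lex_lyapunov_incr (Floc_vertexwise Incr v).
- exact: lex_lyapunov_decr (Floc_vertexwise Decr v).
- exact: lex_lyapunov_Floc_mixed.
Qed.

Lemma GCA2_lex_lyapunov m : exists (V : state n -> int) (W : state n -> nat),
  lex_lyapunov V W (iter 2 (GCA e m)).
Proof.
case: m; do 2 eexists.
- exact/lex_lyapunov_iter/lex_lyapunov_incr/GCA_vertexwise.
- exact/lex_lyapunov_iter/lex_lyapunov_decr/GCA_vertexwise.
- exact: lex_lyapunov_GCA2_mixed.
Qed.

End Threshold.

Theorem theorem3p1 (n : nat) (e : rel 'I_n) (pi : {perm 'I_n}) :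
  simple_graph e ->
  forall m : mode,
    (forall c : seq (state n), periodic_orbit e (SDS e m pi) c -> size c = 1%N) /\
    (forall c : seq (state n), periodic_orbit e (GCA e m) c -> (size c <= 2)%N).
Proof.
case=> e_sym e_irr m; split.
- have [V [W lyap]] := Floc_lex_lyapunov e_sym e_irr m.
  exact: SDS_orbit_size1 lyap.
- have [V [W lyap]] := GCA2_lex_lyapunov e_sym e_irr m.
  exact: GCA_orbit_size_le2 lyap.
Qed.
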